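(* Assume $n>3t+2d$. In any execution of Algorithm 1, if a correct process $p_i$ mbrb-broadcasts $(m,sn)$, then at least $$c-d-\left\lfloor\frac{d\,\lfloor\frac{n+t}{2}\rfloor}{c-d-\lfloor\frac{n+t}{2}\rfloor}\right\rfloor$$ correct processes mbrb-deliver $(m,sn,i)$ at most two communication steps after the mbrb-broadcast.
   Context: System model. There are $n$ asynchronous processes $p_1,\dots,p_n$ with distinct known identities. Up to $t$ are Byzantine (arbitrary behavior); the rest are correct; $c$ is the number of correct processes in the execution, $n-t\le c\le n$. The network is fully connected, asynchronous, never corrupts/duplicates/creates messages; ''broadcast $M$'' sends $M$ to all $n$ processes; a message adversary may suppress, per broadcast by a correct process, up to $d$ ($0\le d<c$) copies addressed to correct processes, all other copies among correct processes being received. Signatures are unforgeable and public keys are known. Time is measured in communication steps: local computation takes zero time and every imp-message has the same transfer delay of one step. Algorithm 1 (code for $p_i$). Each process stores, for each triplet $(m,sn,j)$, a set of saved valid signatures of that triplet, at most one per signer. On $\mathrm{mbrb\_broadcast}(m,sn)$: $p_i$ saves its own signature of $(m,sn,i)$ and broadcasts $\mathrm{BUNDLE}(m,sn,i,S)$, $S$ the saved signatures for $(m,sn,i)$. On receiving $\mathrm{BUNDLE}(m,sn,j,sigs)$: if $p_i$ has not already mbrb-delivered some $(-,sn,j)$ and $sigs$ contains a valid signature of $(m,sn,j)$ by $p_j$, then: (1) save all new valid signatures of $(m,sn,j)$ in $sigs$; (2) if $p_i$ has not yet signed any $(-,sn,j)$, save its own signature of $(m,sn,j)$ and broadcast $\mathrm{BUNDLE}(m,sn,j,\text{all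 saved signatures for }(m,sn,j))$; (3) if strictly more than $\frac{n+t}{2}$ signatures for $(m,sn,j)$ are saved, broadcast $\mathrm{BUNDLE}(m,sn,j,\text{all saved signatures})$ and mbrb-deliver $(m,sn,j)$. A correct process never uses the same sequence number twice. *)

(* Model of Algorithm 1 (signature-based MBRB) executed
   under the "one communication step per message" timing model. *)
From mathcomp Require Import all_boot.
Set Implicit Arguments. Unset Strict Implicit. Unset Printing Implicit Defensive.

Section Algorithm1.
Variable M : eqType.
Variable n t : nat.        (* processes p_0 .. p_(n-1); fault bound t *)

Definition triplet := (M * nat * 'I_n)%type.
(* an (unforgeable) signature: the signed triplet and the signer's identity *)
Definition sig := (triplet * 'I_n)%type.
Definition msg := (M * nat * 'I_n * seq sig)%type.
Definition msg_sigs (mg : msg) : seq sig := mg.2.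

Inductive event := Recv of msg | Bcast of M & nat.

Record lstate := LState {
  saved : seq sig;
  signed : seq (nat * 'I_n);       (* pairs (sn, j) for which it signed some (-,sn,j) *)
  delivered : seq triplet }.

Definition init_state := LState [::] [::] [::].

Definition add_sig (s : sig) (l : seq sig) := if s \in l then l else rcons l s.
Definition sigs_for (l : seq sig) (x : triplet) := [seq s <- l | s.1 == x].

(* one atomic (zero-time) step of Algorithm 1 at process p_i:
   returns new state, broadcast messages (in order), delivered triplets *)
Definition step (i : 'I_n) (st : lstate) (ev : event)
  : lstate * seq msg * seq triplet :=
  match ev with
  | Bcast m sn =>
      let x : triplet := (m, sn, i) in
      let sv := add_sig (x, i) (saved st) in
      (LState sv ((sn, i) :: signed st) (delivered st),
       [:: (m, sn, i, sigs_for sv x)], [::])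
  | Recv mg =>
      let: (m, sn, j, Sg) := mg in
      let x : triplet := (m, sn, j) in
      if ~~ has (fun y : triplet => (y.1.2 == sn) && (y.2 == j)) (delivered st)
         && ((x, j) \in Sg) then
        let sv1 := saved st ++ undup [seq s <- Sg | (s.1 == x) && (s \notin saved st)] in
        let already := (sn, j) \in signed st in
        let sv2 := if already then sv1 else add_sig (x, i) sv1 in
        let sg2 := if already then signed st else (sn, j) :: signed st in
        let out1 : seq msg := if already then [::] else [:: (m, sn, j, sigs_for sv2 x)] in
        (* (3) strictly more than (n+t)/2 signatures: broadcast and deliver *)
        if n + t < 2 * size (sigs_for sv2 x) then
          (LState sv2 sg2 (rcons (delivered st) x),
           out1 ++ [:: (m, sn, j, sigs_for sv2 x)], [:: x])
        else (LState sv2 sg2 (delivered st), out1, [::])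
      else (st, [::], [::])
  end.

(* processing a sequence of events, in order, within one time instant *)
Fixpoint run (i : 'I_n) (st : lstate) (evs : seq event)
  : lstate * seq msg * seq triplet :=
  match evs with
  | [::] => (st, [::], [::])
  | e :: es =>
      let: (st1, o1, d1) := step i st e in
      let: (st2, o2, d2) := run i st1 es in
      (st2, o1 ++ o2, d1 ++ d2)
  end.

(* inp p tau : the events processed by process p at time tau, in order *)
Definition inputs := 'I_n -> nat -> seq event.

Fixpoint state_at (inp : inputs) (p : 'I_n) (tau : nat) : lstate :=
  match tau with
  | 0 => init_state
  | tau'.+1 => (run p (state_at inp p tau') (inp p tau')).1.1
  end.

Definition outs (inp : inputs) (p : 'I_n) (tau : nat) : seq msg :=
  (run p (state_at inp p tau) (inp p tau)).1.2.
Definition dels (inp : inputs) (p : 'I_n) (tau : nat) : seq triplet :=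
  (run p (state_at inp p tau) (inp p tau)).2.

Definition recvs (inp : inputs) (p : 'I_n) (tau : nat) : seq msg :=
  pmap (fun e => if e is Recv mg then Some mg else None) (inp p tau).
Definition bcasts (inp : inputs) (p : 'I_n) (tau : nat) : seq (M * nat) :=
  pmap (fun e => if e is Bcast m sn then Some (m, sn) else None) (inp p tau).

(* byz tau b q : messages sent by (Byzantine) b to q at time tau;
   supp p tau k : correct recipients whose copy of the k-th broadcast of
   p at time tau is suppressed by the message adversary. *)
Definition byz_sends := nat -> 'I_n -> 'I_n -> seq msg.
Definition suppression := 'I_n -> nat -> nat -> {set 'I_n}.

(* multiset of messages sent to q at time tau that q receives (at tau+1) *)
Definition sent_to (C : {set 'I_n}) (inp : inputs) (byz : byz_sends)
    (supp : suppression) (q : 'I_n) (tau : nat) : seq msg :=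
  flatten [seq (if p \in C then
                  [seq km.2 | km <- zip (iota 0 (size (outs inp p tau))) (outs inp p tau)
                            & q \notin supp p tau km.1]
                else byz tau p q) | p <- enum 'I_n].

(* An execution of Algorithm 1 with correct set C, message adversary of
   power d, where every message takes exactly one communication step. *)
Definition execution (C : {set 'I_n}) (d : nat) (inp : inputs)
    (byz : byz_sends) (supp : suppression) : Prop :=
  [/\
      forall p tau k, supp p tau k \subset C /\ #|supp p tau k| <= d,
      forall q, q \in C -> recvs inp q 0 = [::],
      forall q tau, q \in C -> perm_eq (recvs inp q tau.+1) (sent_to C inp byz supp q tau),
      (* unforgeability: a Byzantine process can only use a signature of a
         correct signer after having received it in an earlier broadcast *)
      forall tau b q mg s, b \notin C -> mg \in byz tau b q -> s \in msg_sigs mg ->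
        s.2 \in C ->
        exists tau' p mg', [/\ tau' < tau, p \in C, mg' \in outs inp p tau'
                             & s \in msg_sigs mg']
    & (* a correct process never uses the same sequence number twice *)
      forall p T, p \in C -> uniq [seq ms.2 | ms <- flatten [seq bcasts inp p tau | tau <- iota 0 T]]
  ].

End Algorithm1.

From mathcomp Require Import all_boot zify.
Set Implicit Arguments. Unset Strict Implicit. Unset Printing Implicit Defensive.

(** The bundle that p_i broadcasts at time tau0 reaches every correct process
    outside the set K of at most d processes whose copy the adversary
    suppresses.  No signature of a triplet (-, sn, i) exists before tau0, so
    each such process p <> i signs (m, sn, i) at tau0 + 1 and echoes a bundle
    carrying the signatures of p_i and p.  A correct q that has not delivered
    by tau0 + 2 holds at most T = (n + t) / 2 signatures of (m, sn, i), yet it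
    holds those of p_i and of every echoer whose bundle reached it; so, with S
    the set of echoers, at least |S| + 1 - T copies addressed to q were lost
    (q in K counting as one).  Every broadcast loses at most d copies, so the
    number f of such q satisfies f (|S| + 1 - T) <= d (|S| + 1).  Since
    |S| + 1 + d >= c and c - d > T (because n > 3t + 2d), this rearranges
    into the bound. *)

Lemma uniq_map_inj_in (A B : eqType) (f : A -> B) (s : seq A) :
  uniq (map f s) -> {in s &, injective f}.
Proof.
elim: s => [|a s IH] //= /andP [fa_notin uniq_s] y z.
rewrite !inE => /predU1P [-> | ys] /predU1P [-> | zs] // fyz.
- by rewrite fyz (map_f f zs) in fa_notin.
- by rewrite -fyz (map_f f ys) in fa_notin.
- exact: IH.
Qed.

Lemma uniq_map_flatten_iota (A B : eqType) (f : A -> B) (F : nat -> seq A) T k1 k2 a1 a2 :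
  uniq (map f (flatten [seq F k | k <- iota 0 T])) -> k1 < T -> k2 < T ->
  a1 \in F k1 -> a2 \in F k2 -> f a1 = f a2 -> k1 = k2 /\ a1 = a2.
Proof.
elim: T => // T IH.
rewrite -addn1 iotaD add0n map_cat flatten_cat map_cat /= cats0 cat_uniq addn1 !ltnS.
case/and3P => uniq_T /hasPn disj uniq_last.
have in_prefix k a : k < T -> a \in F k -> f a \in map f (flatten [seq F k | k <- iota 0 T]).
  by move=> lt_kT Fa; apply: map_f; apply/flatten_mapP; exists k; rewrite ?mem_iota.
rewrite (leq_eqVlt k1) (leq_eqVlt k2) => /predU1P [-> | lt1] /predU1P [-> | lt2] Fa1 Fa2 fa12.
- by split => //; apply: (uniq_map_inj_in uniq_last).
- by move: (disj _ (map_f f Fa1)); rewrite fa12 (in_prefix _ _ lt2 Fa2).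
- by move: (disj _ (map_f f Fa2)); rewrite -fa12 (in_prefix _ _ lt1 Fa1).
- exact: IH.
Qed.

Lemma sum_nat_bool (I : finType) (A : {set I}) (P : pred I) :
  \sum_(j in A) (P j : nat) = #|[set j in A | P j]|.
Proof.
rewrite -sum1_card big_mkcond /= [RHS]big_mkcond /=; apply: eq_bigr => j _.
by rewrite !inE; case: (j \in A); case: (P j).
Qed.

Lemma count_bound_divn c d T s f : T < c - d -> c <= s + d -> f * (s - T) <= d * s ->
  c - d - (d * T) %/ (c - d - T) <= c - f.
Proof.
move=> T_lt c_le f_le; have s_gt : 0 < s - T by lia.
have f_le_div : f <= d + (d * T) %/ (s - T).
  have ds_split : d * s = d * (s - T) + d * T by rewrite -mulnDr subnK //; lia.
  by rewrite -(divnMDl _ _ s_gt) -ds_split leq_divRL.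
have : (d * T) %/ (s - T) <= (d * T) %/ (c - d - T) by apply: leq_div2l; lia.
lia.
Qed.

Section LocalStep.
Variables (M : eqType) (n t : nat).
Implicit Types (p : 'I_n) (y : triplet M n) (s : sig M n) (l : seq (sig M n))
  (st : lstate M n) (e : event M n) (mg : msg M n) (evs : seq (event M n)).

Lemma mem_add_sig s l : s \in add_sig s l.
Proof. by rewrite /add_sig; case: ifP => // _; rewrite mem_rcons mem_head. Qed.

Lemma add_sig_subset s l : {subset l <= add_sig s l}.
Proof. by move=> z z_in; rewrite /add_sig; case: ifP => // _; rewrite mem_rcons inE z_in orbT. Qed.

Lemma mem_add_sigP s l z : z \in add_sig s l -> z = s \/ z \in l.
Proof. by rewrite /add_sig; case: ifP => _; [right | rewrite mem_rcons inE => /predU1P]. Qed.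

Lemma sigs_for_add_sig s l y : s.1 != y -> sigs_for (add_sig s l) y = sigs_for l y.
Proof.
by move=> s_y; rewrite /add_sig; case: ifP => // _; rewrite /sigs_for filter_rcons (negbTE s_y).
Qed.

Definition accepts st mg :=
  ~~ has (fun y : triplet M n => (y.1.2 == mg.1.1.2) && (y.2 == mg.1.2)) (delivered st)
  && ((mg.1, mg.1.2) \in mg.2).

Definition signed_slot st mg := (mg.1.1.2, mg.1.2) \in signed st.

Definition new_sigs st mg := undup [seq s <- mg.2 | (s.1 == mg.1) && (s \notin saved st)].

Definition merged_sigs p st mg :=
  let sv := saved st ++ new_sigs st mg in
  if signed_slot st mg then sv else add_sig (mg.1, p) sv.

Definition quorum p st mg := n + t < 2 * size (sigs_for (merged_sigs p st mg) mg.1).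

Lemma step_RecvE p st mg : step t p st (Recv mg) =
  if accepts st mg then
    let sv := merged_sigs p st mg in
    let out := (mg.1, sigs_for sv mg.1) in
    (LState sv (if signed_slot st mg then signed st else (mg.1.1.2, mg.1.2) :: signed st)
       (if quorum p st mg then rcons (delivered st) mg.1 else delivered st),
     (if signed_slot st mg then [::] else [:: out]) ++ (if quorum p st mg then [:: out] else [::]),
     if quorum p st mg then [:: mg.1] else [::])
  else (st, [::], [::]).
Proof.
case: mg => [[[m sn] j] Sg]; rewrite /accepts /quorum /merged_sigs /new_sigs /signed_slot /=.
by case: ifP => // _; case: ifP => _; case: ifP => _; rewrite ?cats0.
Qed.

Lemma mem_new_sigs st mg z :
  (z \in new_sigs st mg) = [&& z.1 == mg.1, z \notin saved st & z \in mg.2].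
Proof. by rewrite mem_undup mem_filter andbA. Qed.

Lemma merged_sigs_subset p st mg : {subset saved st <= merged_sigs p st mg}.
Proof.
move=> z z_in; rewrite /merged_sigs.
by case: ifP => _; [|apply: add_sig_subset]; rewrite mem_cat z_in.
Qed.

Lemma mem_merged_sigs p st mg z : z \in merged_sigs p st mg ->
  z \in saved st \/ z.1 = mg.1 /\ (z \in mg.2 \/ z.2 = p).
Proof.
have mem_sv : z \in saved st ++ new_sigs st mg ->
    z \in saved st \/ z.1 = mg.1 /\ (z \in mg.2 \/ z.2 = p).
  by rewrite mem_cat mem_new_sigs => /orP [| /and3P [/eqP -> _ ->]]; auto.
rewrite /merged_sigs; case: ifP => _ //; case/mem_add_sigP => [-> | ]; last exact: mem_sv.
by right; split; auto.
Qed.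

Lemma sigs_for_merged_sigs p st mg y : mg.1 != y ->
  sigs_for (merged_sigs p st mg) y = sigs_for (saved st) y.
Proof.
move=> mg_y; have sv_y : sigs_for (saved st ++ new_sigs st mg) y = sigs_for (saved st) y.
  rewrite /sigs_for filter_cat -[RHS]cats0; congr (_ ++ _).
  apply/eqP; rewrite -[_ == _]negbK -has_filter; apply/hasPn => s.
  by rewrite mem_new_sigs => /and3P [/eqP -> _ _].
by rewrite /merged_sigs; case: ifP => _; rewrite ?sigs_for_add_sig.
Qed.

Definition recvs_of evs := pmap (fun e => if e is Recv mg then Some mg else None) evs.
Definition bcasts_of evs := pmap (fun e => if e is Bcast m sn then Some (m, sn) else None) evs.

Lemma recvs_of_cons e evs : recvs_of (e :: evs) = recvs_of [:: e] ++ recvs_of evs.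
Proof. by case: e. Qed.

Lemma bcasts_of_cons e evs : bcasts_of (e :: evs) = bcasts_of [:: e] ++ bcasts_of evs.
Proof. by case: e. Qed.

Lemma step_saved_subset p st e : {subset saved st <= saved (step t p st e).1.1}.
Proof.
case: e => [mg | m sn] z z_in; last exact: add_sig_subset.
by rewrite step_RecvE; case: ifP => //= _; apply: merged_sigs_subset.
Qed.

Lemma step_delivered p st e : delivered (step t p st e).1.1 = delivered st ++ (step t p st e).2.
Proof.
case: e => [mg | m sn]; last by rewrite /= cats0.
rewrite step_RecvE; case: ifP => _ /=; last by rewrite cats0.
by case: ifP => _; rewrite ?cats1 ?cats0.
Qed.

Lemma mem_step_dels p st e y : y \in (step t p st e).2 ->
  exists2 mg, mg \in recvs_of [:: e] & mg.1 = y /\ (y, y.2) \in mg.2.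
Proof.
case: e => [mg | m sn]; last by rewrite /= in_nil.
rewrite step_RecvE; case: ifP => //= /andP [_ signed_mg].
by case: ifP => // _; rewrite inE => /eqP ->; exists mg; rewrite ?mem_head.
Qed.

Lemma step_outs_saved p st e mg : mg \in (step t p st e).1.2 ->
  {subset mg.2 <= saved (step t p st e).1.1}.
Proof.
have sigs_for_sub l y : {subset sigs_for l y <= l} by apply: mem_subseq (filter_subseq _ _).
case: e => [mg' | m sn]; last by rewrite inE => /eqP -> /=; apply: sigs_for_sub.
rewrite step_RecvE; case: ifP => //= _; rewrite mem_cat.
by case: ifP => _; case: ifP => _; rewrite ?in_nil ?orbF ?orbb ?mem_seq1 // => /eqP -> /=;
  apply: sigs_for_sub.
Qed.

Lemma step_saved_origin p st e s : s \in saved (step t p st e).1.1 ->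
  [\/ s \in saved st,
      exists2 mg, mg \in recvs_of [:: e] & mg.1 = s.1 /\ (s.1, s.1.2) \in mg.2
    | s.1.2 = p /\ (s.1.1.1, s.1.1.2) \in bcasts_of [:: e]].
Proof.
case: e => [mg | m sn].
  rewrite step_RecvE; case: ifP => /= [/andP [_ signed_mg] | _]; last by constructor 1.
  case/mem_merged_sigs => [| [-> _]]; first by constructor 1.
  by constructor 2; exists mg; rewrite ?mem_head.
by case/mem_add_sigP => [-> | ]; [constructor 3; rewrite /= mem_head | constructor 1].
Qed.

Lemma step_signed_origin p st e k j : (k, j) \in signed (step t p st e).1.1 ->
  [\/ (k, j) \in signed st,
      exists2 mg, mg \in recvs_of [:: e] & [/\ mg.1.1.2 = k, mg.1.2 = j & (mg.1, j) \in mg.2]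
    | j = p /\ k \in [seq ms.2 | ms <- bcasts_of [:: e]]].
Proof.
case: e => [mg | m sn].
  rewrite step_RecvE; case: ifP => /= [/andP [_ signed_mg] | _]; last by constructor 1.
  case: ifP => _; first by constructor 1.
  rewrite inE => /predU1P [[-> ->] | ]; last by constructor 1.
  by constructor 2; exists mg; rewrite ?mem_head.
by rewrite inE => /predU1P [[-> ->] | ]; [constructor 3; rewrite mem_head | constructor 1].
Qed.

Lemma step_Bcast p st m sn (y := (m, sn, p)) :
  (exists2 mg, mg \in (step t p st (Bcast n m sn)).1.2 & mg.1 = y /\ (y, p) \in mg.2) /\
  (y, p) \in saved (step t p st (Bcast n m sn)).1.1.
Proof.
split; last exact: mem_add_sig.
by eexists; first exact: mem_head; rewrite /= mem_filter mem_add_sig eqxx.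
Qed.

Lemma run_cons p st e evs : run t p st (e :: evs) =
  ((run t p (step t p st e).1.1 evs).1.1,
   (step t p st e).1.2 ++ (run t p (step t p st e).1.1 evs).1.2,
   (step t p st e).2 ++ (run t p (step t p st e).1.1 evs).2).
Proof.
rewrite /=; case: (step t p st e) => [[st1 o1] d1] /=.
by case: (run t p st1 evs) => [[st2 o2] d2].
Qed.

Lemma run_saved_subset p st evs : {subset saved st <= saved (run t p st evs).1.1}.
Proof.
elim: evs st => [|e es IH] st //; rewrite run_cons => z z_in.
exact/IH/step_saved_subset.
Qed.

Lemma run_delivered p st evs : delivered (run t p st evs).1.1 = delivered st ++ (run t p st evs).2.
Proof.
elim: evs st => [|e es IH] st; first by rewrite cats0.
by rewrite run_cons /= IH step_delivered catA.
Qed.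

Lemma mem_run_dels p st evs y : y \in (run t p st evs).2 ->
  exists2 mg, mg \in recvs_of evs & mg.1 = y /\ (y, y.2) \in mg.2.
Proof.
elim: evs st => [|e es IH] st //; rewrite run_cons recvs_of_cons mem_cat => /orP [].
  by case/mem_step_dels => mg mg_in ?; exists mg; rewrite ?mem_cat ?mg_in.
by case/IH => mg mg_in ?; exists mg; rewrite ?mem_cat ?mg_in ?orbT.
Qed.

Lemma run_outs_saved p st evs mg : mg \in (run t p st evs).1.2 ->
  {subset mg.2 <= saved (run t p st evs).1.1}.
Proof.
elim: evs st => [|e es IH] st //; rewrite run_cons mem_cat => /orP [/step_outs_saved | /IH //].
by move=> mg_saved z /mg_saved; apply: run_saved_subset.
Qed.

Lemma run_saved_origin p st evs s : s \in saved (run t p st evs).1.1 ->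
  [\/ s \in saved st,
      exists2 mg, mg \in recvs_of evs & mg.1 = s.1 /\ (s.1, s.1.2) \in mg.2
    | s.1.2 = p /\ (s.1.1.1, s.1.1.2) \in bcasts_of evs].
Proof.
elim: evs st => [|e es IH] st; first by constructor 1.
rewrite run_cons recvs_of_cons bcasts_of_cons => /IH [| [mg mg_in ?] | [? bc_in]].
- case/step_saved_origin => [| [mg mg_in ?] | [? bc_in]]; first by constructor 1.
    by constructor 2; exists mg; rewrite ?mem_cat ?mg_in.
  by constructor 3; rewrite mem_cat bc_in.
- by constructor 2; exists mg; rewrite ?mem_cat ?mg_in ?orbT.
- by constructor 3; rewrite mem_cat bc_in orbT.
Qed.

Lemma run_signed_origin p st evs k j : (k, j) \in signed (run t p st evs).1.1 ->
  [\/ (k, j) \in signed st,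
      exists2 mg, mg \in recvs_of evs & [/\ mg.1.1.2 = k, mg.1.2 = j & (mg.1, j) \in mg.2]
    | j = p /\ k \in [seq ms.2 | ms <- bcasts_of evs]].
Proof.
elim: evs st => [|e es IH] st; first by constructor 1.
rewrite run_cons recvs_of_cons bcasts_of_cons map_cat => /IH [| [mg mg_in ?] | [? bc_in]].
- case/step_signed_origin => [| [mg mg_in ?] | [? bc_in]]; first by constructor 1.
    by constructor 2; exists mg; rewrite ?mem_cat ?mg_in.
  by constructor 3; rewrite mem_cat bc_in.
- by constructor 2; exists mg; rewrite ?mem_cat ?mg_in ?orbT.
- by constructor 3; rewrite mem_cat bc_in orbT.
Qed.

Lemma run_Bcast p st evs m sn (y := (m, sn, p)) : (m, sn) \in bcasts_of evs ->
  (exists2 mg, mg \in (run t p st evs).1.2 & mg.1 = y /\ (y, p) \in mg.2) /\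
  (y, p) \in saved (run t p st evs).1.1.
Proof.
elim: evs st => [|e es IH] st //; rewrite run_cons bcasts_of_cons mem_cat => /orP [].
  case: e => [//| m' sn']; rewrite [bcasts_of _]/= mem_seq1 => /eqP [<- <-].
  have [[mg mg_out mg_y] y_saved] := step_Bcast p st m sn.
  by split; [exists mg; rewrite ?mem_cat ?mg_out | apply: run_saved_subset].
case/(IH (step t p st e).1.1) => [[mg mg_out mg_y] y_saved].
by split => //; exists mg; rewrite ?mem_cat ?mg_out ?orbT.
Qed.

End LocalStep.

Section Slot.
Variables (M : eqType) (n t : nat) (i : 'I_n) (m : M) (sn : nat).
Local Notation x := (m, sn, i).
Local Notation T := ((n + t) %/ 2).
Implicit Types (p : 'I_n) (st : lstate M n) (e : event M n) (mg : msg M n) (evs : seq (event M n)).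

Definition slot_delivered (l : seq (triplet M n)) :=
  has (fun y : triplet M n => (y.1.2 == sn) && (y.2 == i)) l.

Definition relevant mg := (mg.1 == x) && ((x, i) \in mg.2).

Definition signs_slot mg := [&& mg.1.1.2 == sn, mg.1.2 == i & (mg.1, i) \in mg.2].

Definition neutral p e :=
  match e with Recv mg => ~~ signs_slot mg | Bcast _ k => (p != i) || (k != sn) end.

Definition own_signed p st := ((sn, i) \in signed st) ==> ((x, p) \in saved st).

Lemma slot_delivered_cat l1 l2 :
  slot_delivered (l1 ++ l2) = slot_delivered l1 || slot_delivered l2.
Proof. exact: has_cat. Qed.

Lemma relevant_signs_slot mg : relevant mg -> signs_slot mg.
Proof. by case/andP => /eqP mg_x x_i; rewrite /signs_slot mg_x !eqxx. Qed.

Lemma signs_slot_relevant mg : signs_slot mg -> mg.1 = x -> relevant mg.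
Proof. by case/and3P => _ _ mg_i mg_x; rewrite /relevant mg_x eqxx -mg_x. Qed.

Lemma neutral_no_relevant p e : neutral p e -> ~~ has relevant (recvs_of [:: e]).
Proof. by case: e => [mg | ? ?] //=; rewrite orbF; apply: contra; apply: relevant_signs_slot. Qed.

Lemma non_neutral p e : ~~ neutral p e ->
  (exists2 mg, e = Recv mg & signs_slot mg) \/
  p = i /\ sn \in [seq ms.2 | ms <- bcasts_of [:: e]].
Proof.
case: e => [mg | m' k] /=; first by rewrite negbK; left; exists mg.
by rewrite negb_or !negbK => /andP [/eqP -> /eqP ->]; right; rewrite mem_head.
Qed.

Lemma relevant_sig mg : relevant mg -> (x, i) \in sigs_for mg.2 x.
Proof. by case/andP => _ x_i; rewrite mem_filter eqxx. Qed.

Lemma relevant_accepts st mg : relevant mg -> ~~ slot_delivered (delivered st) -> accepts st mg.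
Proof. by case/andP => /eqP mg_x x_i undel; rewrite /accepts mg_x /= x_i andbT. Qed.

Lemma step_neutral p st e : neutral p e ->
  [/\ sigs_for (saved (step t p st e).1.1) x = sigs_for (saved st) x,
      ((sn, i) \in signed (step t p st e).1.1) = ((sn, i) \in signed st)
    & ~~ slot_delivered (step t p st e).2].
Proof.
case: e => [mg | m' k] neutral_e; last first.
  split => //=; last first.
    by rewrite in_cons; case: eqP => [[sn_k i_p] | //]; rewrite /= sn_k i_p !eqxx in neutral_e.
  by rewrite sigs_for_add_sig //; apply: contraTneq neutral_e => -[_ -> ->]; rewrite /= !eqxx.
rewrite step_RecvE; case: ifP => [/andP [_ signed_mg] | _] //=.
have slot_ne : ~~ ((mg.1.1.2 == sn) && (mg.1.2 == i)).
  apply: contra neutral_e => /andP [/eqP sn_eq /eqP i_eq].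
  by rewrite /signs_slot -i_eq signed_mg sn_eq !eqxx.
split.
- by rewrite sigs_for_merged_sigs //; apply: contra slot_ne => /eqP ->; rewrite !eqxx.
- by case: ifP => _ //; rewrite in_cons xpair_eqE (eq_sym sn) (eq_sym i) (negbTE slot_ne).
- by case: ifP => _ //; rewrite /slot_delivered /= orbF.
Qed.

Lemma merged_sigs_relevant p st mg : relevant mg -> own_signed p st ->
  {subset sigs_for mg.2 x <= merged_sigs p st mg} /\ (x, p) \in merged_sigs p st mg.
Proof.
case/andP => /eqP mg_x _ /implyP own; split.
  move=> z; rewrite mem_filter => /andP [z_x z_mg].
  have z_sv : z \in saved st ++ new_sigs st mg.
    by rewrite mem_cat mem_new_sigs mg_x z_x z_mg andbT orbN.
  by rewrite /merged_sigs; case: ifP => _ //; apply: add_sig_subset.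
rewrite /merged_sigs /signed_slot mg_x /=; case: ifP => [/own x_p | _]; last exact: mem_add_sig.
by rewrite mem_cat x_p.
Qed.

Lemma step_relevant p st mg : relevant mg -> ~~ slot_delivered (delivered st) -> own_signed p st ->
  let st' := (step t p st (Recv mg)).1.1 in
  [/\ {subset sigs_for mg.2 x <= saved st'}, (x, p) \in saved st' & own_signed p st'] /\
  (x \in (step t p st (Recv mg)).2 \/
   ~~ slot_delivered (delivered st') /\ size (sigs_for (saved st') x) <= T).
Proof.
move=> rel_mg undel own; have [sigs_sub x_p] := merged_sigs_relevant rel_mg own.
have mg_x : mg.1 = x by case/andP: rel_mg => /eqP.
rewrite step_RecvE (relevant_accepts rel_mg undel) /=.
split; first by rewrite /own_signed x_p implybT.
rewrite /quorum mg_x; case: ifP => [_ | /negbT]; first by left; rewrite mem_head.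
by rewrite -leqNgt => size_le; right; split => //; rewrite leq_divRL // mulnC.
Qed.

Lemma step_relevant_signs p st mg : relevant mg -> ~~ slot_delivered (delivered st) ->
  (sn, i) \notin signed st ->
  exists2 mg', mg' \in (step t p st (Recv mg)).1.2 & relevant mg' && ((x, p) \in mg'.2).
Proof.
move=> rel_mg undel unsigned.
have own : own_signed p st by rewrite /own_signed (negbTE unsigned).
have [sigs_sub x_p] := merged_sigs_relevant rel_mg own.
have mg_x : mg.1 = x by case/andP: rel_mg => /eqP.
have fresh_slot : signed_slot st mg = false by rewrite /signed_slot mg_x (negbTE unsigned).
exists (x, sigs_for (merged_sigs p st mg) x).
  by rewrite step_RecvE (relevant_accepts rel_mg undel) fresh_slot /= mg_x mem_head.
rewrite /relevant /= eqxx !mem_filter /= eqxx x_p !andbT.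
exact/sigs_sub/relevant_sig.
Qed.

Lemma run_delivers_or_bounded p st evs :
  ~~ slot_delivered (delivered st) -> own_signed p st ->
  {in recvs_of evs, forall mg, signs_slot mg -> mg.1 = x} ->
  (p = i -> sn \notin [seq ms.2 | ms <- bcasts_of evs]) ->
  let st' := (run t p st evs).1.1 in
  x \in (run t p st evs).2 \/
  [/\ ~~ slot_delivered (delivered st'), own_signed p st',
      {in recvs_of evs, forall mg, relevant mg ->
         {subset sigs_for mg.2 x <= saved st'} /\ (x, p) \in saved st'},
      has relevant (recvs_of evs) -> size (sigs_for (saved st') x) <= T
    & ~~ has relevant (recvs_of evs) -> sigs_for (saved st') x = sigs_for (saved st) x].
Proof.
elim: evs st => [|e es IH] st undel own slot_x no_bcast; first by right; split.
have slot_x' : {in recvs_of es, forall mg, signs_slot mg -> mg.1 = x}.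
  by move=> mg mg_in; apply: slot_x; rewrite recvs_of_cons mem_cat mg_in orbT.
have no_bcast' : p = i -> sn \notin [seq ms.2 | ms <- bcasts_of es].
  by move/no_bcast; rewrite bcasts_of_cons map_cat mem_cat negb_or => /andP [].
rewrite run_cons recvs_of_cons has_cat.
have [neutral_e | /non_neutral [[mg e_mg slot_mg] | [/no_bcast]]] := boolP (neutral p e);
  last first.
- by rewrite bcasts_of_cons map_cat mem_cat negb_or => /andP [/negbTE ->].
- have rel_mg : relevant mg.
    by apply: signs_slot_relevant slot_mg (slot_x _ _ slot_mg); rewrite e_mg mem_head.
  subst e; have [[sigs_sub x_p own1] [x_del | [undel1 size1]]] := step_relevant rel_mg undel own.
    by left; rewrite mem_cat x_del.
  have [x_del | [undel2 own2 sub2 size2 eq2]] := IH _ undel1 own1 slot_x' no_bcast'.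
    by left; rewrite mem_cat x_del orbT.
  have sub_run := @run_saved_subset M n t p (step t p st (Recv mg)).1.1 es.
  right; rewrite [recvs_of [:: _]]/= /= rel_mg; split => //.
  + move=> mg'; rewrite inE => /predU1P [-> _ | ]; last exact: sub2.
    by split; [move=> z /sigs_sub /sub_run | apply: sub_run].
  + by move=> _; have [/size2 // | /eq2 ->] := boolP (has relevant (recvs_of es)).
- have [sigs_eq signed_eq undel_e] := step_neutral st neutral_e.
  have undel1 : ~~ slot_delivered (delivered (step t p st e).1.1).
    by rewrite step_delivered slot_delivered_cat negb_or undel.
  have own1 : own_signed p (step t p st e).1.1.
    by apply/implyP; rewrite signed_eq => /(implyP own); apply: step_saved_subset.
  have no_rel := neutral_no_relevant neutral_e.
  have [x_del | [undel2 own2 sub2 size2 eq2]] := IH _ undel1 own1 slot_x' no_bcast'.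
    by left; rewrite mem_cat x_del orbT.
  right; split; rewrite ?(negbTE no_rel) //=.
  + move=> mg; rewrite mem_cat => /orP [mg_e rel_mg | ]; last exact: sub2.
    by move/hasPn/(_ mg mg_e): no_rel; rewrite rel_mg.
  + by move=> no_rel_es; rewrite eq2.
Qed.

Lemma run_signs p st evs mg : p != i ->
  ~~ slot_delivered (delivered st) -> (sn, i) \notin signed st ->
  {in recvs_of evs, forall mg, signs_slot mg -> mg.1 = x} ->
  mg \in recvs_of evs -> relevant mg ->
  exists2 mg', mg' \in (run t p st evs).1.2 & relevant mg' && ((x, p) \in mg'.2).
Proof.
move=> p_i; elim: evs st => [|e es IH] st undel unsigned slot_x //.
rewrite run_cons recvs_of_cons mem_cat => mg_in rel_mg.
have [neutral_e | /non_neutral [[mg' e_mg' slot_mg'] | [p_eq _]]] := boolP (neutral p e);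
  last first.
- by rewrite p_eq eqxx in p_i.
- have rel_mg' : relevant mg'.
    apply: signs_slot_relevant slot_mg' (slot_x _ _ slot_mg').
    by rewrite recvs_of_cons e_mg' mem_head.
  have [mg'' out good] := step_relevant_signs p rel_mg' undel unsigned.
  by exists mg''; rewrite // mem_cat e_mg' out.
- have [_ signed_eq undel_e] := step_neutral st neutral_e.
  have mg_es : mg \in recvs_of es.
    case/orP: mg_in => // mg_e.
    by move/hasPn/(_ mg mg_e): (neutral_no_relevant neutral_e); rewrite rel_mg.
  have [||| mg'' out good] := IH (step t p st e).1.1 _ _ _ mg_es rel_mg.
  + by rewrite step_delivered slot_delivered_cat negb_or undel.
  + by rewrite signed_eq.
  + by move=> mg' mg'_in; apply: slot_x; rewrite recvs_of_cons mem_cat mg'_in orbT.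
  by exists mg''; rewrite // mem_cat out orbT.
Qed.

End Slot.

Section Execution.
Variables (M : eqType) (n t d : nat) (C : {set 'I_n}) (inp : inputs M n)
  (byz : byz_sends M n) (supp : suppression n).
Hypothesis exec : execution t C d inp byz supp.
Local Notation stt p tau := (state_at t inp p tau).
Implicit Types (p q : 'I_n) (s : sig M n) (mg : msg M n).

Lemma state_atS p tau : stt p tau.+1 = (run t p (stt p tau) (inp p tau)).1.1.
Proof. by []. Qed.

Lemma sent_to_origin q tau mg : mg \in sent_to t C inp byz supp q tau ->
  (exists2 p, p \in C & mg \in outs t inp p tau) \/ (exists2 b, b \notin C & mg \in byz tau b q).
Proof.
case/flatten_mapP => p _; case: ifP => p_C mg_in; last by right; exists p; rewrite ?p_C.
left; exists p => //; case/mapP: mg_in => km; rewrite mem_filter => /andP [_ km_in] ->.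
by have := map_f snd km_in; rewrite -/(unzip2 _) unzip2_zip // size_iota.
Qed.

Lemma mem_sent_to_nth p q tau k mg0 : p \in C -> k < size (outs t inp p tau) ->
  q \notin supp p tau k -> nth mg0 (outs t inp p tau) k \in sent_to t C inp byz supp q tau.
Proof.
move=> p_C lt_k q_kept; apply/flatten_mapP; exists p; first by rewrite mem_enum.
rewrite p_C; apply/mapP; exists (k, nth mg0 (outs t inp p tau) k) => //.
rewrite mem_filter /= q_kept.
have <- : nth (0, mg0) (zip (iota 0 (size (outs t inp p tau))) (outs t inp p tau)) k =
    (k, nth mg0 (outs t inp p tau) k) by rewrite nth_zip ?size_iota // nth_iota.
by apply: mem_nth; rewrite size_zip size_iota minnn.
Qed.

Lemma received_nth_out p q tau k mg0 : p \in C -> q \in C -> k < size (outs t inp p tau) ->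
  q \notin supp p tau k -> nth mg0 (outs t inp p tau) k \in recvs inp q tau.+1.
Proof.
case: exec => _ _ recv_perm _ _ p_C q_C lt_k q_kept.
by rewrite (perm_mem (recv_perm q tau q_C)); apply: mem_sent_to_nth.
Qed.

Lemma received_sig_saved q tau mg s : q \in C -> mg \in recvs inp q tau -> s \in mg.2 ->
  s.2 \in C -> exists tau' p, [/\ tau' <= tau, p \in C & s \in saved (stt p tau')].
Proof.
case: exec => _ recv0 recv_perm unforgeable _ q_C.
case: tau => [|tau]; first by rewrite (recv0 q q_C).
rewrite (perm_mem (recv_perm q tau q_C)).
case/sent_to_origin => [[p p_C out_p] | [b b_C byz_b]] s_in s_C.
  by exists tau.+1, p; split => //; apply: run_outs_saved out_p _ s_in.
have [tau' [p [mg' [lt_tau p_C out_p s_in']]]] := unforgeable tau b q mg s b_C byz_b s_in s_C.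
by exists tau'.+1, p; split => //; [apply: ltnW | apply: run_outs_saved out_p _ s_in'].
Qed.

Lemma bcasts_sn_inj p tau1 tau2 m1 m2 k : p \in C ->
  (m1, k) \in bcasts inp p tau1 -> (m2, k) \in bcasts inp p tau2 -> tau1 = tau2 /\ m1 = m2.
Proof.
case: exec => _ _ _ _ uniq_sn p_C in1 in2.
have [||-> [->]] // := uniq_map_flatten_iota (uniq_sn p (maxn tau1 tau2).+1 p_C) _ _ in1 in2 erefl.
  by rewrite ltnS leq_maxl.
by rewrite ltnS leq_maxr.
Qed.

Lemma saved_sig_origin tau p s : p \in C -> s \in saved (stt p tau) -> s.1.2 \in C ->
  exists2 tau', tau' < tau & (s.1.1.1, s.1.1.2) \in bcasts inp s.1.2 tau'.
Proof.
elim/ltn_ind: tau p s => -[//|tau] IH p s p_C.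
rewrite state_atS => /run_saved_origin [s_saved | [mg mg_in [mg_s s_in]] | [-> bc_in]] j_C.
- have [tau' lt_tau bc_in] := IH tau (ltnSn _) p s p_C s_saved j_C.
  by exists tau'; first exact: ltnW.
- have [tau'' [p'' [le_tau p''_C s_saved]]] := received_sig_saved p_C mg_in s_in j_C.
  have [tau' lt_tau bc_in] := IH tau'' (leq_ltn_trans le_tau (ltnSn _)) p'' _ p''_C s_saved j_C.
  by exists tau'; first exact: ltnW (leq_trans lt_tau le_tau).
- by exists tau.
Qed.

Section Broadcast.
Variables (i : 'I_n) (m : M) (sn tau0 : nat).
Hypothesis i_C : i \in C.
Hypothesis bcast_x : (m, sn) \in bcasts inp i tau0.
Local Notation x := (m, sn, i).
Local Notation T := ((n + t) %/ 2).
Local Notation relevant := (relevant i m sn).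

Lemma saved_slot_sig tau p s : p \in C -> s \in saved (stt p tau) ->
  s.1.2 = i -> s.1.1.2 = sn -> tau0 < tau /\ s.1 = x.
Proof.
move=> p_C s_saved s_i s_sn; have j_C : s.1.2 \in C by rewrite s_i.
have [tau' lt_tau] := saved_sig_origin p_C s_saved j_C.
rewrite s_i s_sn => /(bcasts_sn_inj i_C bcast_x) [tau0_eq m_eq]; split; first by rewrite tau0_eq.
by move: s_i s_sn m_eq; case: s.1 => -[m' k] j /= -> -> ->.
Qed.

Lemma received_slot_sig q tau mg y : q \in C -> mg \in recvs inp q tau -> (y, i) \in mg.2 ->
  y.2 = i -> y.1.2 = sn -> tau0 < tau /\ y = x.
Proof.
move=> q_C mg_in y_in y_i y_sn.
have [tau' [p [le_tau p_C y_saved]]] := received_sig_saved q_C mg_in y_in i_C.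
have [lt_tau0 y_x] := saved_slot_sig p_C y_saved y_i y_sn.
by split; [apply: leq_trans lt_tau0 le_tau | exact: y_x].
Qed.

Lemma slot_bundles_x q tau : q \in C ->
  {in recvs inp q tau, forall mg, signs_slot i sn mg -> mg.1 = x}.
Proof.
move=> q_C mg mg_in /and3P [/eqP mg_sn /eqP mg_i mg_sig].
by have [_ ->] := received_slot_sig q_C mg_in mg_sig mg_i mg_sn.
Qed.

Lemma unsigned_before tau p : p \in C -> p != i -> tau <= tau0.+1 ->
  (sn, i) \notin signed (stt p tau).
Proof.
move=> p_C p_i; elim: tau => [//|tau IH] le_tau.
apply/negP; rewrite state_atS => /run_signed_origin [| [mg mg_in [mg_sn mg_i mg_sig]] | [i_p _]].
- exact/negP/IH/ltnW.
- have [lt_tau _] := received_slot_sig p_C mg_in mg_sig mg_i mg_sn.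
  by rewrite ltnS leqNgt lt_tau in le_tau.
- by rewrite i_p eqxx in p_i.
Qed.

Lemma undelivered_before tau p : p \in C -> tau <= tau0.+1 ->
  ~~ slot_delivered i sn (delivered (stt p tau)).
Proof.
move=> p_C; elim: tau => [//|tau IH] le_tau.
rewrite state_atS run_delivered slot_delivered_cat negb_or IH ?(ltnW le_tau) //=.
apply/hasPn => y /mem_run_dels [mg mg_in [<- mg_sig]].
apply/negP => /andP [/eqP mg_sn /eqP mg_i]; rewrite mg_i in mg_sig.
have [lt_tau _] := received_slot_sig p_C mg_in mg_sig mg_i mg_sn.
by rewrite ltnS leqNgt lt_tau in le_tau.
Qed.

Lemma sn_unused tau : tau != tau0 -> sn \notin [seq ms.2 | ms <- bcasts inp i tau].
Proof.
move=> tau_ne; apply/mapP => -[[m' k] bc_in /= sn_k]; rewrite -sn_k in bc_in.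
by have [tau_eq _] := bcasts_sn_inj i_C bcast_x bc_in; rewrite tau_eq eqxx in tau_ne.
Qed.

(* [K0] and [echoers] are the sets K and S of the proof idea. *)
Let bundle0 : msg M n := (x, [::]).
Let k0 := find relevant (outs t inp i tau0).
Let first_msg := nth bundle0 (outs t inp i tau0) k0.
Let K0 := supp i tau0 k0.
Let echo p mg := relevant mg && ((x, p) \in mg.2).
Let echo_idx p := find (echo p) (outs t inp p tau0.+1).
Let echo_msg p := nth bundle0 (outs t inp p tau0.+1) (echo_idx p).
Let echoers := [set p in C | (p \notin K0) && (p != i)].
Let cut q := [set p | q \in supp p tau0.+1 (echo_idx p)].
Let losses q := #|echoers :&: cut q| + (q \in K0).

Lemma first_bundle : k0 < size (outs t inp i tau0) /\ relevant first_msg.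
Proof.
have [[mg mg_out [mg_x x_i]] _] := @run_Bcast M n t i (stt i tau0) _ _ _ bcast_x.
have has_rel : has relevant (outs t inp i tau0).
  by apply/hasP; exists mg; rewrite // /relevant mg_x eqxx.
by split; [rewrite -has_find | apply: nth_find].
Qed.

Lemma i_signed : (x, i) \in saved (stt i tau0.+1).
Proof. exact: (@run_Bcast M n t i (stt i tau0) _ _ _ bcast_x).2. Qed.

Lemma received_first_bundle q : q \in C -> q \notin K0 -> first_msg \in recvs inp q tau0.+1.
Proof. by move=> q_C q_kept; apply: received_nth_out => //; case: first_bundle. Qed.

Lemma echo_bundle p : p \in echoers ->
  echo_idx p < size (outs t inp p tau0.+1) /\ echo p (echo_msg p).
Proof.
rewrite inE => /andP [p_C /andP [p_kept p_i]].
have [mg out_mg echo_mg] := run_signs t p_i (undelivered_before p_C (leqnn _))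
  (unsigned_before p_C p_i (leqnn _)) (slot_bundles_x p_C)
  (received_first_bundle p_C p_kept) (proj2 first_bundle).
have has_echo : has (echo p) (outs t inp p tau0.+1) by apply/hasP; exists mg.
by split; [rewrite -has_find | apply: nth_find].
Qed.

Lemma received_echo p q : p \in echoers -> q \in C -> p \notin cut q ->
  echo_msg p \in recvs inp q tau0.+2.
Proof.
move=> p_echo q_C p_uncut; have [lt_idx _] := echo_bundle p_echo.
apply: received_nth_out => //; last by rewrite inE in p_uncut.
by move: p_echo; rewrite inE => /andP [].
Qed.

Lemma undelivered_late_sigs q : q \in C ->
  x \notin dels t inp q tau0.+1 -> x \notin dels t inp q tau0.+2 ->
  let sv := saved (stt q tau0.+3) in
  {in recvs inp q tau0.+2, forall mg, relevant mg -> {subset sigs_for mg.2 x <= sv}} /\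
  (has relevant (recvs inp q tau0.+1 ++ recvs inp q tau0.+2) ->
     [/\ (x, q) \in sv, (x, i) \in sv & size (sigs_for sv x) <= T]).
Proof.
move=> q_C undel1 undel2 sv.
have own0 : own_signed i m sn q (stt q tau0.+1).
  have [-> | q_i] := eqVneq q i; first by rewrite /own_signed i_signed implybT.
  by rewrite /own_signed (negbTE (unsigned_before q_C q_i (leqnn _))).
have fresh tau : tau0 < tau -> q = i -> sn \notin [seq ms.2 | ms <- bcasts inp q tau].
  by move=> lt_tau ->; apply: sn_unused; rewrite gtn_eqF.
have [x_del | [undelA ownA subA sizeA eqA]] := run_delivers_or_bounded t
    (undelivered_before q_C (leqnn _)) own0 (slot_bundles_x q_C) (fresh _ (ltnSn _)).
  by move: undel1; rewrite /dels x_del.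
have [x_del | [_ _ subB sizeB eqB]] := run_delivers_or_bounded t
    undelA ownA (slot_bundles_x q_C) (fresh _ (leqnSn _)).
  by move: undel2; rewrite /dels x_del.
split => [mg mg_in rel_mg | ]; first by case: (subB mg mg_in rel_mg).
rewrite has_cat => /orP [/hasP [mg mg_in rel_mg] | /hasP [mg mg_in rel_mg]].
- have [sub_mg x_q] := subA mg mg_in rel_mg.
  have sub_run := @run_saved_subset M n t q (stt q tau0.+2) (inp q tau0.+2).
  split; [exact: sub_run | exact/sub_run/sub_mg/relevant_sig |].
  have [/sizeB // | /eqB ->] := boolP (has relevant (recvs inp q tau0.+2)).
  by apply: sizeA; apply/hasP; exists mg.
- have [sub_mg x_q] := subB mg mg_in rel_mg.
  by split => //; [exact/sub_mg/relevant_sig | apply: sizeB; apply/hasP; exists mg].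
Qed.

Lemma losses_lower_bound q : q \in C ->
  x \notin dels t inp q tau0.+1 -> x \notin dels t inp q tau0.+2 ->
  #|echoers| + 1 <= losses q + T.
Proof.
move=> q_C undel1 undel2; have [late_sub late_heard] := undelivered_late_sigs q_C undel1 undel2.
set A := echoers :\: cut q.
have heard_echo p : p \in A -> echo_msg p \in recvs inp q tau0.+2 /\ echo p (echo_msg p).
  rewrite inE => /andP [p_uncut p_echo].
  by split; [apply: received_echo | case: (echo_bundle p_echo)].
rewrite /losses -(cardsID (cut q) echoers) -/A -!addnA leq_add2l.
have [heard | silent] := boolP (has relevant (recvs inp q tau0.+1 ++ recvs inp q tau0.+2)).
  have [x_q x_i size_le] := late_heard heard.
  have card_iA : #|i |: A| = #|A| + 1 by rewrite cardsU1 !inE eqxx !andbF addnC.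
  apply: leq_trans (leq_addl _ _); rewrite -card_iA.
  apply: leq_trans size_le; rewrite cardE -(size_map (fun p => (x, p))).
  apply: uniq_leq_size => [|s /mapP [p]]; first by rewrite map_inj_uniq ?enum_uniq // => p p' [].
  rewrite mem_enum in_setU1 => /predU1P [-> | /heard_echo [echo_in /andP [rel_echo x_p]]] ->.
    by rewrite mem_filter eqxx.
  by rewrite mem_filter eqxx (late_sub _ echo_in rel_echo) // mem_filter eqxx.
have q_K0 : q \in K0.
  apply: contraR silent => q_kept; rewrite has_cat; apply/orP; left; apply/hasP.
  by exists first_msg; [apply: received_first_bundle | case: first_bundle].
have -> : #|A| = 0.
  apply/eqP; rewrite cards_eq0; apply: contraNT silent.
  case/set0Pn => p /heard_echo [echo_in /andP [rel_echo _]].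
  by rewrite has_cat; apply/orP; right; apply/hasP; exists (echo_msg p).
by rewrite q_K0 leq_addr.
Qed.

Lemma card_undelivered :
  #|C :\: [set q | [exists k : 'I_3, x \in dels t inp q (tau0 + k)]]| * (#|echoers| + 1 - T)
    <= d * (#|echoers| + 1).
Proof.
case: exec => supp_small _ _ _ _; set F := C :\: _.
have losses_F q : q \in F -> #|echoers| + 1 - T <= losses q.
  rewrite !inE negb_exists => /andP [/forallP undel q_C]; rewrite leq_subLR (addnC T).
  apply: losses_lower_bound => //.
    by move: (undel (@Ordinal 3 1 isT)); rewrite addn1.
  by move: (undel (@Ordinal 3 2 isT)); rewrite addn2.
rewrite -sum_nat_const; apply: (@leq_trans (\sum_(q in F) losses q)); first exact: leq_sum.
apply: (@leq_trans (\sum_(q in C) losses q)).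
  by rewrite [leqRHS](big_setID F) /= (setIidPr (subsetDl _ _)) leq_addr.
rewrite big_split /= mulnDr muln1; apply: leq_add; last first.
  rewrite sum_nat_bool; apply: leq_trans (proj2 (supp_small i tau0 k0)).
  by apply/subset_leq_card/subsetP => q; rewrite inE => /andP [].
rewrite mulnC -sum_nat_const.
have -> : \sum_(q in C) #|echoers :&: cut q| =
    \sum_(p in echoers) \sum_(q in C) (q \in supp p tau0.+1 (echo_idx p)).
  by rewrite exchange_big /=; apply: eq_bigr => q _; rewrite sum_nat_bool setIdE.
apply: leq_sum => p _; rewrite sum_nat_bool.
apply: leq_trans (proj2 (supp_small p tau0.+1 (echo_idx p))).
by apply/subset_leq_card/subsetP => q; rewrite inE => /andP [].
Qed.

Lemma card_correct_le : #|C| <= #|echoers| + 1 + d.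
Proof.
case: exec => supp_small _ _ _ _.
apply: (@leq_trans #|K0 :|: (i |: echoers)|).
  apply/subset_leq_card/subsetP => q q_C; rewrite !inE q_C /=.
  by case: (q \in K0); case: eqP.
apply: leq_trans (leq_card_setU _ _) _.
have K0_small : #|K0| <= d := proj2 (supp_small i tau0 k0).
rewrite cardsU1 (_ : i \notin echoers) ?inE ?eqxx ?andbF //=.
by rewrite addnC [#|echoers| + 1]addnC leq_add2l.
Qed.

Lemma delivered_lower_bound : 3 * t + 2 * d < n -> #|~: C| <= t ->
  #|C| - d - (d * T) %/ (#|C| - d - T)
    <= #|[set q in C | [exists k : 'I_3, x \in dels t inp q (tau0 + k)]]|.
Proof.
move=> n_large byz_few; rewrite setIdE.
set D := [set q | _]; rewrite -[#|C :&: D|](addnK #|C :\: D|) cardsID.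
have card_n : #|~: C| + #|C| = n by rewrite addnC cardsC card_ord.
apply: count_bound_divn card_correct_le card_undelivered; lia.
Qed.

End Broadcast.
End Execution.

Theorem mainTheorem8 (M : eqType) (n t d : nat) (C : {set 'I_n})
    (inp : inputs M n) (byz : byz_sends M n) (supp : suppression n)
    (i : 'I_n) (m : M) (sn tau0 : nat) :
  3 * t + 2 * d < n ->
  #|~: C| <= t ->
  d < #|C| ->
  execution t C d inp byz supp ->
  i \in C ->
  (m, sn) \in bcasts inp i tau0 ->
  #|C| - d - (d * ((n + t) %/ 2)) %/ (#|C| - d - (n + t) %/ 2)
    <= #|[set q in C | [exists k : 'I_3, (m, sn, i) \in dels t inp q (tau0 + k)]]|.
Proof.
(* [d < #|C|] already follows from the other hypotheses. *)
move=> n_large byz_few _ exec i_C bcast_x.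
exact: (delivered_lower_bound exec i_C bcast_x n_large byz_few).
Qed.
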